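(* Let $\nu\in\mathbb C$ with $q^{2\nu+2i}\ne1$ for all integers $i\ge0$. For integers $m\ge0$ define the polynomial in $1/x$ $$r_{m,\nu}(x;q^2)=\sum_{i=0}^{\lfloor m/2\rfloor}\frac{a_i(\nu,m)}{x^{m-2i}}q^{-i(i+1)},\qquad a_i(\nu,m)=q^{-m(m+\nu)}q^{i(3i+\nu-1)}\frac{(-1)^i(q^{2\nu};q^2)_{m-i}(q^2;q^2)_{m-i}}{(q^2;q^2)_i(q^{2\nu};q^2)_i(q^2;q^2)_{m-2i}}.$$ Then $r_{0,\nu}=1$, $r_{1,\nu}(x;q^2)=q^{-(\nu+1)}(1-q^{2\nu})x^{-1}$, and for all $m\ge1$ and $x\ne0$, $$q^{2m}r_{m+1,\nu}(x;q^2)=q^{-(\nu+1)}\frac{1-q^{2(\nu+m)}}{x}r_{m,\nu}(x;q^2)-q^{-(\nu+2)}r_{m-1,\nu}(x;q^2).$$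
   Context: Fix $0<q<1$; $(a;q)_0=1$, $(a;q)_k=\prod_{i=0}^{k-1}(1-aq^i)$. $\lfloor a\rfloor$ is the largest integer $\le a$. *)

From Stdlib Require Import Reals.
From Coquelicot Require Import Coquelicot.
Open Scope C_scope.

(* complex power with positive real base: b^w := exp(w * ln b) *)
Definition cpowR (b : R) (w : C) : C :=
  let s := (Re w * ln b)%R in let t := (Im w * ln b)%R in
  (exp s * cos t, exp s * sin t)%R.

Fixpoint qpoch (a b : C) (k : nat) : C :=
  match k with
  | O => 1
  | S k' => qpoch a b k' * (1 - a * b ^ k')
  end.

Definition a_coef (q : R) (nu : C) (m i : nat) : C :=
  let q2 := RtoC (q ^ 2) in
  let q2nu := cpowR q (2 * nu) in
  cpowR q (- (INR m * (INR m + nu)))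
  * cpowR q (INR i * (3 * INR i + nu - 1))
  * ((-1) ^ i * qpoch q2nu q2 (m - i) * qpoch q2 q2 (m - i)
     / (qpoch q2 q2 i * qpoch q2nu q2 i * qpoch q2 q2 (m - 2 * i))).

Definition r_poly (q : R) (m : nat) (nu : C) (x : C) : C :=
  sum_n (fun i => a_coef q nu m i / x ^ (m - 2 * i)
                  * cpowR q (- (INR i * (INR i + 1)))) (Nat.div2 m).

From Stdlib Require Import Reals Lra Lia.
From Coquelicot Require Import Coquelicot.
Open Scope C_scope.

(* The
   recurrence holds summand by summand: the i-th summand of
   [q^(2m) r_{m+1}] is the i-th summand of the first term on the right minus
   the (i-1)-st summand of [r_{m-1}].  After peeling the last factor off each
   q-Pochhammer symbol this is a rational identity in [Q], [T] and [1/x], and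
   the exponents of [q] balance.  For odd [m], the top summand of [r_{m+1}]
   has no partner in [r_m] and is matched by the top summand of [r_{m-1}]
   alone. *)

Lemma cpowR_add (b : R) (w1 w2 : C) : cpowR b (w1 + w2) = cpowR b w1 * cpowR b w2.
Proof.
  destruct w1 as [a1 b1], w2 as [a2 b2]; unfold cpowR; simpl.
  apply injective_projections; simpl;
    rewrite !Rmult_plus_distr_r, exp_plus, ?cos_plus, ?sin_plus; ring.
Qed.

Lemma cpowR_0 (b : R) : cpowR b 0 = 1.
Proof.
  unfold cpowR; simpl; rewrite !Rmult_0_l, exp_0, cos_0, sin_0.
  apply injective_projections; simpl; ring.
Qed.

Lemma cpowR_neq0 (b : R) (w : C) : cpowR b w <> 0.
Proof.
  intro Hw; apply C1_nz.
  rewrite <- (cpowR_0 b), <- (Cplus_opp_r w), cpowR_add, Hw; ring.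
Qed.

Lemma cpowR_shift (b : R) (w1 w2 v1 v2 : C) :
  w1 + w2 = v1 + v2 -> cpowR b w2 = cpowR b v1 * cpowR b v2 / cpowR b w1.
Proof.
  intros Hw.
  assert (Hmul : cpowR b w1 * cpowR b w2 = cpowR b v1 * cpowR b v2)
    by now rewrite <- !cpowR_add, Hw.
  rewrite <- Hmul; field; apply cpowR_neq0.
Qed.

Lemma cpowR_double_INR (b : R) (n : nat) :
  (0 < b)%R -> cpowR b (2 * INR n) = RtoC (b ^ 2) ^ n.
Proof.
  intros Hb; unfold cpowR; simpl.
  rewrite <- RtoC_pow.
  replace ((2 * INR n - 0 * 0) * ln b)%R with (INR n * ln (b ^ 2))%R
    by (rewrite ln_pow by lra; simpl INR; ring).
  replace ((2 * 0 + 0 * INR n) * ln b)%R with 0%R by ring.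
  rewrite cos_0, sin_0, Rmult_1_r, Rmult_0_r.
  change (exp (INR n * ln (b ^ 2))) with (Rpower (b ^ 2) (INR n)).
  now rewrite Rpower_pow by (apply pow_lt; lra).
Qed.

Lemma qpoch_neq0 (a b : C) (k : nat) :
  (forall i, 1 - a * b ^ i <> 0) -> qpoch a b k <> 0.
Proof.
  intros Hfac; induction k as [|k IHk]; simpl.
  - apply C1_nz.
  - now apply Cmult_neq_0.
Qed.

Lemma sum_n_lincomb (f g h : nat -> C) (a b c : C) (n : nat) :
  (forall i, (i <= n)%nat -> a * f i = b * g i - c * h i) ->
  a * sum_n f n = b * sum_n g n - c * sum_n h n.
Proof.
  induction n as [|n IHn]; intros Hfgh.
  - rewrite !sum_O; apply Hfgh; lia.
  - rewrite !sum_Sn; change plus with Cplus.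
    rewrite Cmult_plus_distr_l, IHn by (intros; apply Hfgh; lia).
    rewrite Hfgh by lia; ring.
Qed.

Definition shift0 (h : nat -> C) (i : nat) : C :=
  match i with O => 0 | S j => h j end.

Lemma sum_n_shift0 (h : nat -> C) (n : nat) : sum_n (shift0 h) (S n) = sum_n h n.
Proof.
  induction n as [|n IHn].
  - rewrite sum_Sn, !sum_O; change plus with Cplus; simpl; ring.
  - now rewrite sum_Sn, IHn, (sum_Sn h).
Qed.

Lemma r_poly_0 (q : R) (nu x : C) : r_poly q 0 nu x = 1.
Proof.
  unfold r_poly, a_coef; simpl Nat.div2; rewrite sum_O; simpl.
  replace (- (0 * (0 + nu))) with (RtoC 0)
    by (apply injective_projections; simpl; ring).
  replace (0 * (3 * 0 + nu - 1)) with (RtoC 0)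
    by (apply injective_projections; simpl; ring).
  replace (- (0 * (0 + 1))) with (RtoC 0)
    by (apply injective_projections; simpl; ring).
  rewrite !cpowR_0; field.
Qed.

Section Recurrence.

Variables (q : R) (nu x : C).
Hypothesis q_in_01 : (0 < q < 1)%R.
Hypothesis q2nu_not_unit : forall i : nat, cpowR q (2 * nu + 2 * INR i) <> 1.
Hypothesis x_neq0 : x <> 0.

Local Notation Q := (RtoC (q ^ 2)).
Local Notation T := (cpowR q (2 * nu)).

Lemma Q_factor_neq0 (k : nat) : 1 - Q * Q ^ k <> 0.
Proof.
  rewrite <- RtoC_pow, <- RtoC_mult, <- RtoC_minus; intro H; apply RtoC_inj in H.
  assert (Hlt : (0 <= (q ^ 2) ^ S k < 1)%R)
    by (apply pow_lt_1_compat; [nra | lia]).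
  rewrite <- tech_pow_Rmult in Hlt; lra.
Qed.

Lemma T_factor_neq0 (k : nat) : 1 - T * Q ^ k <> 0.
Proof.
  rewrite <- cpowR_double_INR, <- cpowR_add by lra.
  intro H; apply (q2nu_not_unit k).
  rewrite <- (Cplus_0_r (cpowR _ _)), <- H; ring.
Qed.

Lemma qpoch_Q_neq0 (k : nat) : qpoch Q Q k <> 0.
Proof. apply qpoch_neq0, Q_factor_neq0. Qed.

Lemma qpoch_T_neq0 (k : nat) : qpoch T Q k <> 0.
Proof. apply qpoch_neq0, T_factor_neq0. Qed.

Local Hint Resolve Q_factor_neq0 T_factor_neq0 qpoch_Q_neq0 qpoch_T_neq0
  cpowR_neq0 Cpow_nz : nonzero.

Definition r_term (m i : nat) : C :=
  a_coef q nu m i / x ^ (m - 2 * i) * cpowR q (- (INR i * (INR i + 1))).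

Lemma r_poly_sum (m : nat) : r_poly q m nu x = sum_n (r_term m) (Nat.div2 m).
Proof. reflexivity. Qed.

Definition r_exponent (m i : nat) : C :=
  - (INR m * (INR m + nu)) + INR i * (3 * INR i + nu - 1) + - (INR i * (INR i + 1)).

Ltac exponent_arith :=
  unfold r_exponent;
  repeat (rewrite plus_INR || rewrite mult_INR || rewrite S_INR);
  apply injective_projections; simpl; ring.

Definition r_ratio (m i : nat) : C :=
  (-1) ^ i * qpoch T Q (m - i) * qpoch Q Q (m - i)
  / (qpoch Q Q i * qpoch T Q i * qpoch Q Q (m - 2 * i)).

Lemma r_term_split (m i : nat) :
  r_term m i = cpowR q (r_exponent m i) * r_ratio m i / x ^ (m - 2 * i).
Proof.
  unfold r_term, a_coef, r_exponent, r_ratio; rewrite !cpowR_add; unfold Cdiv; ring.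
Qed.

Lemma r_term_rec_first (m : nat) :
  cpowR q (2 * INR m) * r_term (m + 1) 0 =
  cpowR q (- (nu + 1)) * (1 - cpowR q (2 * (nu + INR m))) / x * r_term m 0.
Proof.
  rewrite !r_term_split.
  rewrite (cpowR_shift q (- (nu + 1)) (r_exponent m 0) (r_exponent (m + 1) 0) (2 * INR m))
    by exponent_arith.
  replace (2 * (nu + INR m)) with (2 * nu + 2 * INR m) by ring.
  rewrite !cpowR_add, !cpowR_double_INR by lra.
  unfold r_ratio; rewrite !Nat.mul_0_r, !Nat.sub_0_r, Nat.add_1_r; cbn [qpoch].
  rewrite !Cpow_S; field; repeat split; auto with nonzero.
Qed.

Lemma r_term_rec (m j : nat) : (2 * S j <= m)%nat ->
  cpowR q (2 * INR m) * r_term (m + 1) (S j) =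
  cpowR q (- (nu + 1)) * (1 - cpowR q (2 * (nu + INR m))) / x * r_term m (S j)
  - cpowR q (- (nu + 2)) * r_term (m - 1) j.
Proof.
  intros Hjm; destruct (Nat.le_exists_sub _ _ Hjm) as [n [-> _]].
  rewrite !r_term_split.
  replace (n + 2 * S j - 1)%nat with (S (n + 2 * j)) by lia.
  rewrite (cpowR_shift q (- (nu + 1)) (r_exponent (n + 2 * S j) (S j))
             (r_exponent (n + 2 * S j + 1) (S j)) (2 * INR (n + 2 * S j)))
    by exponent_arith.
  rewrite (cpowR_shift q (- (nu + 2)) (r_exponent (S (n + 2 * j)) j)
             (r_exponent (n + 2 * S j + 1) (S j))
             (2 * INR (n + 2 * S j) + 2 * INR (S n)))
    by exponent_arith.
  replace (2 * (nu + INR (n + 2 * S j))) with (2 * nu + 2 * INR (n + 2 * S j)) by ring.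
  rewrite !cpowR_add, !cpowR_double_INR by lra.
  unfold r_ratio.
  replace (n + 2 * S j + 1 - S j)%nat with (S (S (j + n))) by lia.
  replace (n + 2 * S j - S j)%nat with (S (j + n)) by lia.
  replace (n + 2 * S j + 1 - 2 * S j)%nat with (S n) by lia.
  replace (n + 2 * S j - 2 * S j)%nat with n by lia.
  replace (S (n + 2 * j) - j)%nat with (S (j + n)) by lia.
  replace (S (n + 2 * j) - 2 * j)%nat with (S n) by lia.
  cbn [qpoch].
  replace (2 * S j)%nat with (S (S (j + j))) by lia.
  repeat (rewrite Cpow_S || rewrite Cpow_add_r).
  field; repeat split; auto with nonzero.
Qed.

Lemma r_term_rec_last (m k : nat) : m = (2 * k + 1)%nat ->
  cpowR q (2 * INR m) * r_term (m + 1) (S k) =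
  - (cpowR q (- (nu + 2)) * r_term (m - 1) k).
Proof.
  intros ->; rewrite !r_term_split.
  replace (2 * k + 1 - 1)%nat with (2 * k)%nat by lia.
  rewrite (cpowR_shift q (- (nu + 2)) (r_exponent (2 * k) k)
             (r_exponent (2 * k + 1 + 1) (S k)) (2 * INR (2 * k + 1)))
    by exponent_arith.
  unfold r_ratio.
  replace (2 * k + 1 + 1 - S k)%nat with (S k) by lia.
  replace (2 * k + 1 + 1 - 2 * S k)%nat with 0%nat by lia.
  replace (2 * k - k)%nat with k by lia.
  replace (2 * k - 2 * k)%nat with 0%nat by lia.
  cbn [qpoch]; rewrite ?Cpow_S.
  field; repeat split; auto with nonzero.
Qed.

Lemma r_poly_1 : r_poly q 1 nu x = cpowR q (- (nu + 1)) * (1 - T) / x.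
Proof.
  unfold r_poly, a_coef; simpl Nat.div2; rewrite sum_O.
  cbn [Nat.sub Nat.mul Nat.add INR qpoch Cpow].
  replace (- (1 * (1 + nu))) with (- (nu + 1))
    by (apply injective_projections; simpl; ring).
  replace (0 * (3 * 0 + nu - 1)) with (RtoC 0)
    by (apply injective_projections; simpl; ring).
  replace (- (0 * (0 + 1))) with (RtoC 0)
    by (apply injective_projections; simpl; ring).
  rewrite !cpowR_0.
  pose proof (Q_factor_neq0 0) as HQ; cbn [Cpow] in HQ; rewrite Cmult_1_r in HQ.
  field; repeat split; auto.
Qed.

Lemma r_poly_rec (m : nat) : (1 <= m)%nat ->
  cpowR q (2 * INR m) * r_poly q (m + 1) nu x =
  cpowR q (- (nu + 1)) * (1 - cpowR q (2 * (nu + INR m))) / x * r_poly q m nu x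
  - cpowR q (- (nu + 2)) * r_poly q (m - 1) nu x.
Proof.
  intros Hm; rewrite !r_poly_sum.
  assert (Hterm : forall i, (2 * i <= m)%nat ->
    cpowR q (2 * INR m) * r_term (m + 1) i =
    cpowR q (- (nu + 1)) * (1 - cpowR q (2 * (nu + INR m))) / x * r_term m i
    - cpowR q (- (nu + 2)) * shift0 (r_term (m - 1)) i).
  { intros [|j] Hj; simpl shift0.
    - rewrite r_term_rec_first; ring.
    - now apply r_term_rec. }
  destruct (Nat.Even_or_Odd m) as [[k Hk] | [k Hk]].
  - destruct k as [|k]; [lia|].
    replace (Nat.div2 (m + 1)) with (S k)
      by (replace (m + 1)%nat with (S (2 * S k)) by lia;
          now rewrite Nat.div2_succ_double).
    replace (Nat.div2 m) with (S k) by (rewrite Hk; now rewrite Nat.div2_double).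
    replace (Nat.div2 (m - 1)) with k
      by (replace (m - 1)%nat with (S (2 * k)) by lia; now rewrite Nat.div2_succ_double).
    rewrite <- (sum_n_shift0 (r_term (m - 1)) k).
    apply sum_n_lincomb; intros i Hi; apply Hterm; lia.
  - replace (Nat.div2 (m + 1)) with (S k)
      by (replace (m + 1)%nat with (2 * S k)%nat by lia; now rewrite Nat.div2_double).
    replace (Nat.div2 m) with k
      by (rewrite Hk, Nat.add_1_r; now rewrite Nat.div2_succ_double).
    replace (Nat.div2 (m - 1)) with k
      by (replace (m - 1)%nat with (2 * k)%nat by lia; now rewrite Nat.div2_double).
    rewrite <- (sum_n_shift0 (r_term (m - 1)) k), !sum_Sn.
    change plus with Cplus; simpl shift0.
    rewrite Cmult_plus_distr_l,
      (sum_n_lincomb (r_term (m + 1)) (r_term m) (shift0 (r_term (m - 1))) _ _ _ k)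
      by (intros i Hi; apply Hterm; lia).
    rewrite (r_term_rec_last m k Hk); ring.
Qed.

End Recurrence.

Theorem mainTheorem18 (q : R) (nu : C) :
  (0 < q < 1)%R ->
  (forall i : nat, cpowR q (2 * nu + 2 * INR i) <> 1) ->
  (forall x : C, r_poly q 0 nu x = 1) /\
  (forall x : C, x <> 0 ->
     r_poly q 1 nu x = cpowR q (- (nu + 1)) * (1 - cpowR q (2 * nu)) / x) /\
  (forall (m : nat) (x : C), (1 <= m)%nat -> x <> 0 ->
     cpowR q (2 * INR m) * r_poly q (m + 1) nu x =
       cpowR q (- (nu + 1)) * (1 - cpowR q (2 * (nu + INR m))) / x * r_poly q m nu x
       - cpowR q (- (nu + 2)) * r_poly q (m - 1) nu x).
Proof.
  intros Hq Hnu; split; [|split].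
  - apply r_poly_0.
  - intros x Hx; now apply r_poly_1.
  - intros m x Hm Hx; now apply r_poly_rec.
Qed.
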